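(* Let $A$ be an alphabet of infinite cardinality $\kappa$ and let $S$ be the free semigroup over $A$. Then there exists a finite coloring of $S$ such that for no variable word $w(v)$ over $A$ is the set $\{w(a) : a \in A\}$ monochromatic.
   Context: The free semigroup $S$ over $A$ is the set of nonempty finite words over $A$ with concatenation. Given a symbol $v\notin A$, a variable word is a word over $A\cup\{v\}$ in which $v$ occurs; for $a\in A$, $w(a)$ is obtained by replacing every occurrence of $v$ in $w(v)$ by $a$. *)

From Stdlib Require Import List.
Import ListNotations.

Definition infinite_type (A : Type) : Prop :=
  forall s : list A, exists a : A, ~ In a s.

(* The free semigroup over A: nonempty finite words (concatenation is the
   operation; only the carrier matters for colorings). *)
Definition word (A : Type) : Type := { s : list A | s <> [] }.

(* Variable words: words over A ∪ {v}, encoded as list (option A),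
   with v = None, in which v occurs. *)
Definition is_variable_word {A : Type} (w : list (option A)) : Prop :=
  In None w.

Definition subst_var {A : Type} (w : list (option A)) (a : A) : list A :=
  map (fun x => match x with None => a | Some b => b end) w.

Lemma subst_var_nonempty {A : Type} (w : list (option A)) (a : A) :
  is_variable_word w -> subst_var w a <> [].
Proof.
  unfold is_variable_word, subst_var; destruct w; simpl; [tauto | discriminate].
Qed.

Definition inst {A : Type} (w : list (option A)) (Hw : is_variable_word w) (a : A)
  : word A := exist _ (subst_var w a) (subst_var_nonempty w a Hw).

From Stdlib Require Import List Lia Arith Permutation ClassicalDescription.
Import ListNotations.

(* Color a word by the parity of its number of distinct letters together with
   whether it starts with a fixed letter a0.  If a variable word w starts with
   a constant b, then w(b) and w(f), for a letter f not occurring in w, have the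
   same first letter but numbers of distinct letters differing by one.  If w
   starts with the variable, then w(a0) starts with a0 and w(a1) does not. *)

Section Coloring.

Context {A : Type}.

Definition letters (w : list (option A)) : list A :=
  flat_map (fun x => match x with Some b => [b] | None => [] end) w.

Lemma in_subst_var (w : list (option A)) (a x : A) :
  In x (subst_var w a) <-> (In None w /\ x = a) \/ In x (letters w).
Proof.
  induction w as [|[b|] w IH]; simpl.
  - tauto.
  - rewrite IH. intuition congruence.
  - rewrite IH. intuition congruence.
Qed.

Lemma in_subst_var_var (w : list (option A)) (a x : A) :
  is_variable_word w -> (In x (subst_var w a) <-> x = a \/ In x (letters w)).
Proof. intros Hw. rewrite in_subst_var. tauto. Qed.

Definition A_eq_dec (x y : A) : {x = y} + {x <> y} :=
  excluded_middle_informative (x = y).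

Definition distinct_count (s : list A) : nat := length (nodup A_eq_dec s).

Lemma distinct_count_ext (s t : list A) :
  (forall x, In x s <-> In x t) -> distinct_count s = distinct_count t.
Proof.
  intros Hst. apply Permutation_length, NoDup_Permutation; try apply NoDup_nodup.
  intros x. rewrite !nodup_In. apply Hst.
Qed.

Lemma distinct_count_cons_fresh (a : A) (s : list A) :
  ~ In a s -> distinct_count (a :: s) = S (distinct_count s).
Proof. intros Ha. unfold distinct_count. simpl. now destruct (in_dec _ a s). Qed.

Lemma distinct_count_subst_fresh (w : list (option A)) (a b : A) :
  is_variable_word w -> ~ In a (letters w) -> In b (letters w) ->
  distinct_count (subst_var w a) = S (distinct_count (subst_var w b)).
Proof.
  intros Hw Ha Hb.
  rewrite (distinct_count_ext (subst_var w a) (a :: letters w)),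
    (distinct_count_ext (subst_var w b) (letters w)).
  - now apply distinct_count_cons_fresh.
  - intros x. rewrite in_subst_var_var by exact Hw. intuition (subst; auto).
  - intros x. rewrite in_subst_var_var by exact Hw. simpl; intuition.
Qed.

Definition starts_with (a0 : A) (s : list A) : bool :=
  match s with x :: _ => if A_eq_dec x a0 then true else false | [] => false end.

Definition color (a0 : A) (s : list A) : nat :=
  2 * Nat.b2n (Nat.odd (distinct_count s)) + Nat.b2n (starts_with a0 s).

Lemma color_lt_4 (a0 : A) (s : list A) : color a0 s < 4.
Proof.
  unfold color. destruct (Nat.odd _), (starts_with _ _); simpl; lia.
Qed.

Lemma color_eq (a0 : A) (s t : list A) : color a0 s = color a0 t ->
  Nat.odd (distinct_count s) = Nat.odd (distinct_count t) /\
  starts_with a0 s = starts_with a0 t.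
Proof.
  unfold color.
  destruct (Nat.odd _), (Nat.odd _), (starts_with _ s), (starts_with _ t);
    simpl; intros H; split; congruence || lia.
Qed.

End Coloring.

Theorem theorem2p10 (A : Type) (HA : infinite_type A) :
  exists (k : nat) (c : word A -> nat),
    (forall s, c s < k) /\
    forall (w : list (option A)) (Hw : is_variable_word w),
      ~ (exists i : nat, forall a : A, c (inst w Hw a) = i).
Proof.
  destruct (HA []) as [a0 _].
  destruct (HA [a0]) as [a1 Ha1].
  exists 4, (fun s => color a0 (proj1_sig s)).
  split; [intros s; apply color_lt_4|].
  intros w Hw [i Hi].
  assert (Hcol : forall a b, color a0 (subst_var w a) = color a0 (subst_var w b))
    by (intros a b; exact (eq_trans (Hi a) (eq_sym (Hi b)))).
  destruct w as [|[b|] w]; [destruct Hw | |].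
  - destruct (HA (letters (Some b :: w))) as [f Hf].
    destruct (color_eq _ _ _ (Hcol f b)) as [Hodd _].
    rewrite (distinct_count_subst_fresh _ f b Hw Hf), Nat.odd_succ,
      <- Nat.negb_odd in Hodd by (simpl; auto).
    destruct (Nat.odd _); discriminate.
  - destruct (color_eq _ _ _ (Hcol a0 a1)) as [_ Hstart].
    simpl in Hstart.
    destruct (A_eq_dec a0 a0) as [_|]; [|congruence].
    destruct (A_eq_dec a1 a0) as [->|]; [apply Ha1; left; reflexivity|discriminate].
Qed.
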